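(* Let $\tilde S\subseteq\mathfrak P$. Suppose $\tilde O\subseteq\mathcal C_{\mathfrak P}(\tilde S)$ is an unimprovable set with respect to $\tilde S$ that extends to $\tilde X:=\{o\}\cup\tilde X'\subseteq\mathcal C_{\mathfrak P}(\tilde S)$, and suppose there exists $h\in\mathcal C_{\mathfrak P}(\tilde S)$ of weight $\omega_{\tilde S}(o)$ that anticommutes with $o$ but commutes with every operator in $\tilde X'$. Then $\tilde O\cup\{o\}$ is an unimprovable set with respect to $\tilde S$ that extends to $\tilde X'$.
   Context: $\mathfrak P$ is the group of $N$-qubit Pauli operators modulo phases; $\mathcal C_{\mathfrak P}(\tilde S)$ is the centralizer of $\tilde S$; $\Pi(T)$ is the product of the elements of a finite set $T$. The weight of a Pauli operator is its number of non-identity tensor factors. For $l\in\mathcal C_{\mathfrak P}(\tilde S)$, $\omega_{\tilde S}(l)$ is the minimum weight of an $e\in\mathcal C_{\mathfrak P}(\tilde S)$ anticommuting with $l$ ($+\infty$ if none). A set $\tilde O\subseteq\mathcal C_{\mathfrak P}(\tilde S)$ is unimprovable with respect to $\tilde S$ if $\omega_{\tilde S}(\Pi(\tilde Y))=\min_{y\in\tilde Y}\omega_{\tilde S}(y)$ for every $\tilde Y\subseteq\tilde O$; it extends to a set $\tilde Q$ if for every $\tilde Y\subseteq\tilde O\cup\tilde Q$ with $\tilde Y\cap\tilde O\neq\emptyset$, $\omega_{\tilde S}(\Pi(\tilde Y))\le\min_{y\in\tilde Y\cap\tilde O}\omega_{\tilde S}(y)$. *)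

(* N-qubit Pauli operators modulo phases, encoded by their
   (x,z) bits on each qubit: I=(0,0), X=(1,0), Z=(0,1), Y=(1,1). *)
From mathcomp Require Import all_boot.
Set Implicit Arguments. Unset Strict Implicit. Unset Printing Implicit Defensive.

Definition Pauli (N : nat) : finType := {ffun 'I_N -> bool * bool}.

Section Pauli.
Variable N : nat.

Definition pmul (p q : Pauli N) : Pauli N :=
  [ffun i => (xorb (p i).1 (q i).1, xorb (p i).2 (q i).2)].
Definition pid : Pauli N := [ffun => (false, false)].

Definition pprod (T : {set Pauli N}) : Pauli N := \big[pmul/pid]_(t in T) t.

Definition weight (p : Pauli N) : nat := #|[set i | p i != (false, false)]|.

(* commutation: symplectic inner product is even *)
Definition commuteb (p q : Pauli N) : bool :=
  ~~ odd (\sum_(i < N) (((p i).1 && (q i).2) + ((p i).2 && (q i).1))).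

Definition centralizer (S : {set Pauli N}) : {set Pauli N} :=
  [set p | [forall s in S, commuteb p s]].

(* option nat with None = +infinity *)
Definition omin (a b : option nat) : option nat :=
  match a, b with
  | None, _ => b
  | _, None => a
  | Some x, Some y => Some (minn x y)
  end.
Definition ole (a b : option nat) : bool :=
  match a, b with
  | _, None => true
  | None, Some _ => false
  | Some x, Some y => x <= y
  end.

Definition omega (S : {set Pauli N}) (l : Pauli N) : option nat :=
  \big[omin/None]_(e in centralizer S | ~~ commuteb e l) Some (weight e).

Definition omega_min (S Y : {set Pauli N}) : option nat :=
  \big[omin/None]_(y in Y) omega S y.

Definition unimprovable (S O : {set Pauli N}) : Prop :=
  O \subset centralizer S /\
  forall Y : {set Pauli N}, Y \subset O -> omega S (pprod Y) = omega_min S Y.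

Definition extends_to (S O Q : {set Pauli N}) : Prop :=
  forall Y : {set Pauli N}, Y \subset O :|: Q -> Y :&: O != set0 ->
    ole (omega S (pprod Y)) (omega_min S (Y :&: O)).

End Pauli.

(* The lower bound [omega_min S Y <= omega S (pprod Y)] holds for every Y, since
   an operator anticommuting with a product anticommutes with one of its factors.
   So only the upper bound on [omega S (pprod Y)] for Y inside O, o and X' matters.
   If the minimum m of omega over the O-part of Y is at most omega S o, the
   extension hypothesis already gives it.  Otherwise o is in Y, and h commutes
   with every other factor of Y: with those in X' by hypothesis, and with those
   in O because their omega exceeds weight h = omega S o.  Hence h anticommutes
   with pprod Y, and omega S (pprod Y) <= weight h = omega S o. *)
From HB Require Import structures.
From mathcomp Require Import all_boot.
Set Implicit Arguments. Unset Strict Implicit. Unset Printing Implicit Defensive.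

Section PauliProduct.
Variable N : nat.
Implicit Types (e p q : Pauli N) (Y : {set Pauli N}).

Lemma pmulA : associative (@pmul N).
Proof.
by move=> p q r; apply/ffunP=> i; rewrite !ffunE /=;
  case: (p i) (q i) (r i) => [[] []] [[] []] [[] []].
Qed.

Lemma pmulC : commutative (@pmul N).
Proof.
by move=> p q; apply/ffunP=> i; rewrite !ffunE /=; case: (p i) (q i) => [[] []] [[] []].
Qed.

Lemma pmul1p : left_id (pid N) (@pmul N).
Proof. by move=> p; apply/ffunP=> i; rewrite !ffunE /=; case: (p i). Qed.

HB.instance Definition _ :=
  Monoid.isComLaw.Build (Pauli N) (pid N) (@pmul N) pmulA pmulC pmul1p.

Lemma commuteb_pmul e p q : commuteb e (pmul p q) = (commuteb e p == commuteb e q).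
Proof.
rewrite /commuteb !(big_morph odd oddD (erefl : odd 0 = false)).
rewrite (eq_bigr (fun i => odd (((e i).1 && (p i).2) + ((e i).2 && (p i).1))
                         (+) odd (((e i).1 && (q i).2) + ((e i).2 && (q i).1)))).
  by rewrite big_split /=; case: (\big[_/_]_(i < N) _); case: (\big[_/_]_(i < N) _).
by move=> i _; rewrite !ffunE /=; case: (e i) (p i) (q i) => [[] []] [[] []] [[] []].
Qed.

Lemma commuteb_pid e : commuteb e (pid N).
Proof. by rewrite /commuteb big1 // => i _; rewrite ffunE /=; case: (e i) => [[] []]. Qed.

Lemma commuteb_pprod e Y : {in Y, forall y, commuteb e y} -> commuteb e (pprod Y).
Proof.
move=> eY; apply: (big_ind (commuteb e)) => //; first exact: commuteb_pid.
by move=> p q ep eq; rewrite commuteb_pmul ep eq.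
Qed.

Lemma commuteb_pprodD1 e Y o :
  o \in Y -> {in Y :\ o, forall y, commuteb e y} -> commuteb e (pprod Y) = commuteb e o.
Proof.
move=> oY eY; rewrite /pprod (big_setD1 o oY) /= commuteb_pmul.
by rewrite (commuteb_pprod eY); case: commuteb.
Qed.

End PauliProduct.

Lemma ominA : associative omin.
Proof. by case=> [a|] [b|] [c|] //=; rewrite minnA. Qed.
Lemma ominC : commutative omin.
Proof. by case=> [a|] [b|] //=; rewrite minnC. Qed.
Lemma omin1 : left_id None omin.
Proof. by case. Qed.

HB.instance Definition _ := Monoid.isComLaw.Build (option nat) None omin ominA ominC omin1.

Lemma ole_refl a : ole a a.
Proof. by case: a => //= a; rewrite leqnn. Qed.
Lemma ole_trans a b c : ole a b -> ole b c -> ole a c.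
Proof. by case: a b c => [a|] [b|] [c|] //=; apply: leq_trans. Qed.
Lemma ole_total a b : ~~ ole a b -> ole b a.
Proof. by case: a b => [a|] [b|] //=; rewrite -ltnNge => /ltnW. Qed.
Lemma ole_antisym a b : ole a b -> ole b a -> a = b.
Proof. by case: a b => [a|] [b|] //= ab ba; rewrite (@anti_leq a b) ?ab. Qed.
Lemma ole_omin c a b : ole c a -> ole c b -> ole c (omin a b).
Proof. by case: c a b => [c|] [a|] [b|] //= ca cb; rewrite leq_min ca cb. Qed.

Lemma bigomin_ole (I : finType) (P : pred I) (F : I -> option nat) j :
  P j -> ole (\big[omin/None]_(i | P i) F i) (F j).
Proof.
move=> Pj; rewrite (bigD1 j) //=.
by case: (F j) (\big[_/_]_(i | _) _) => [a|] [b|] //=; rewrite ?leqnn ?geq_minl.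
Qed.

Lemma ole_bigomin (I : finType) (P : pred I) (F : I -> option nat) c :
  (forall j, P j -> ole c (F j)) -> ole c (\big[omin/None]_(i | P i) F i).
Proof. by move=> cF; apply: (big_ind (ole c)) => //; [case: c cF | exact: ole_omin]. Qed.

Section Omega.
Variables (N : nat) (S : {set Pauli N}).
Implicit Types (e l : Pauli N) (Y : {set Pauli N}).

Lemma omega_le_weight l e :
  e \in centralizer S -> ~~ commuteb e l -> ole (omega S l) (Some (weight e)).
Proof. by move=> eS el; apply: (bigomin_ole (fun e => Some (weight e))); rewrite eS. Qed.

Lemma omega_min_le Y y : y \in Y -> ole (omega_min S Y) (omega S y).
Proof. exact: bigomin_ole. Qed.

Lemma omega_min_set0 : omega_min S set0 = None.
Proof. by rewrite /omega_min big_set0. Qed.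

Lemma omega_min_le_pprod Y : ole (omega_min S Y) (omega S (pprod Y)).
Proof.
apply: ole_bigomin => e /andP[eS eY].
have [y yY ey] : exists2 y, y \in Y & ~~ commuteb e y.
  apply/exists_inP; apply: contraR eY => /exists_inPn eY.
  by apply: commuteb_pprod => y /eY /negPn.
exact: ole_trans (omega_min_le yY) (omega_le_weight eS ey).
Qed.

End Omega.

Section Extension.
Variables (N : nat) (S O X' : {set Pauli N}) (o h : Pauli N).
Hypothesis O_ext : extends_to S O (o |: X').
Hypothesis hS : h \in centralizer S.
Hypothesis omega_o : Some (weight h) = omega S o.
Hypothesis h_anti_o : ~~ commuteb h o.
Hypothesis h_comm_X' : {in X', forall x, commuteb h x}.

(* Elements of O with omega above omega S o = weight h cannot anticommute with h. *)
Lemma omega_pprod_le_omega_o (Y : {set Pauli N}) :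
  Y \subset O :|: (o |: X') -> o \in Y ->
  ~~ ole (omega_min S (Y :&: O)) (omega S o) ->
  ole (omega S (pprod Y)) (omega S o).
Proof.
move=> YOX oY m_gt; rewrite -omega_o; apply: omega_le_weight => //.
rewrite (commuteb_pprodD1 oY) // => y /setD1P[yo yY].
have [yO | yNO] := boolP (y \in O).
  apply: contraR m_gt => hy; rewrite -omega_o.
  have yYO : y \in Y :&: O by rewrite inE yY yO.
  exact: ole_trans (omega_min_le S yYO) (omega_le_weight hS hy).
by apply: h_comm_X'; move/subsetP/(_ y yY): YOX; rewrite !inE (negbTE yNO) (negbTE yo).
Qed.

Lemma omega_pprod_le_omega_min (Y : {set Pauli N}) :
  Y \subset O :|: (o |: X') ->
  ole (omega S (pprod Y)) (omega_min S (Y :&: (O :|: [set o]))).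
Proof.
move=> YOX; apply: ole_bigomin => z; rewrite !inE => /andP[zY zOo].
have m_le_z : z \in O -> ole (omega_min S (Y :&: O)) (omega S z).
  by move=> zO; apply: omega_min_le; rewrite inE zY zO.
have ext_le_m : Y :&: O != set0 -> ole (omega S (pprod Y)) (omega_min S (Y :&: O)).
  exact: O_ext.
have [m_le_o | m_gt_o] := boolP (ole (omega_min S (Y :&: O)) (omega S o)).
  have YO0 : Y :&: O != set0.
    by apply: contraTneq m_le_o => ->; rewrite omega_min_set0 -omega_o.
  apply: ole_trans (ext_le_m YO0) _.
  by case/orP: zOo => [/m_le_z | /eqP ->].
have [oY | oNY] := boolP (o \in Y).
  apply: ole_trans (omega_pprod_le_omega_o YOX oY m_gt_o) _.
  case/orP: zOo => [zO | /eqP ->]; last exact: ole_refl.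
  exact: ole_trans (ole_total m_gt_o) (m_le_z zO).
have zO : z \in O by case/orP: zOo => // /eqP zo; rewrite -zo zY in oNY.
have YO0 : Y :&: O != set0 by apply/set0Pn; exists z; rewrite inE zY zO.
exact: ole_trans (ext_le_m YO0) (m_le_z zO).
Qed.

End Extension.

Theorem lemma8 (N : nat) (S O X' : {set Pauli N}) (o h : Pauli N) :
  unimprovable S O ->
  o |: X' \subset centralizer S ->
  extends_to S O (o |: X') ->
  h \in centralizer S ->
  Some (weight h) = omega S o ->
  ~~ commuteb h o ->
  (forall x, x \in X' -> commuteb h x) ->
  unimprovable S (O :|: [set o]) /\ extends_to S (O :|: [set o]) X'.
Proof.
move=> [OS _] oX'S O_ext hS omega_o h_anti_o h_comm_X'.
have bound := omega_pprod_le_omega_min O_ext hS omega_o h_anti_o h_comm_X'.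
have Oo_sub : O :|: [set o] \subset O :|: (o |: X').
  by apply/subsetP => y; rewrite !inE => /orP[-> | ->]; rewrite ?orbT.
split; [split|].
- rewrite subUset OS sub1set; apply: (subsetP oX'S); exact: setU11.
- move=> Y YOo; apply: ole_antisym; last exact: omega_min_le_pprod.
  by rewrite -{2}(setIidPl YOo); apply: bound; apply: subset_trans Oo_sub.
- move=> Y YOoX' _; apply: bound; apply: subset_trans YOoX' _.
  by apply/subsetP => y; rewrite !inE orbA.
Qed.
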